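(* For every $\kappa_G$-NMPG there exist a family of local potential functions $\{\hat\Phi_i\}_{i\in\mathcal N}$ (i.e. satisfying the NMPG identity) and constants $\Phi_{\min},\Phi_{\max}>0$ with $0\le\Phi_{\max}-\Phi_{\min}\le\frac{2n(\kappa_G)}{1-\gamma}$ such that $\Phi_{\min}\le\hat\Phi_i(\xi)\le\Phi_{\max}$ for all $i\in\mathcal N$ and all $\xi\in\Xi$.
   Context: Networked Markov game. There are $n$ agents $\mathcal N=\{1,\dots,n\}$ placed at the nodes of an undirected graph $\mathcal G=(\mathcal N,\mathcal E)$ with graph distance $\mathrm{dist}$. For an integer $\kappa\ge0$, $N_i^\kappa=\{j\in\mathcal N:\mathrm{dist}(i,j)\le\kappa\}$ (so $i\in N_i^\kappa$), $\mathcal N_i=N_i^1$, $-N_i^\kappa=\mathcal N\setminus N_i^\kappa$, and $n(\kappa)=\max_i|N_i^\kappa|$. Agent $i$ has a finite local state space $\mathcal S_i$ and a finite local action space $\mathcal A_i$; $\mathcal S=\prod_i\mathcal S_i$, $\mathcal A=\prod_i\mathcal A_i$, and for $I\subseteq\mathcal N$ we write $s_I,a_I,\mathcal S_I,\mathcal A_I$ for the joint states/actions/spaces of the agents in $I$ (the subscript $-i$ means $\mathcal N\setminus\{i\}$). The dynamics are $\mathcal P(s'\mid s,a)=\prod_i\mathcal P_i(s_i'\mid s_{\mathcal N_i},a_i)$, the initial distribution is $\mu\in\Delta(\mathcal S)$, and $\gamma\in(0,1)$ is a discount factor. Each agent has a reward $r_i:\mathcal S\times\mathcal A\to[0,1]$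 depending only on $(s_{N_i^{\kappa_r}},a_{N_i^{\kappa_r}})$ for a fixed integer $\kappa_r\ge0$. A local policy of agent $i$ is a map $\xi_i:\mathcal S_i\to\Delta(\mathcal A_i)$; $\Xi_i$ is the set of them, $\Xi_I=\prod_{i\in I}\Xi_i$, $\Xi=\Xi_{\mathcal N}$, and a joint policy $\xi=(\xi_1,\dots,\xi_n)$ acts by $\xi(a\mid s)=\prod_i\xi_i(a_i\mid s_i)$. $J_i(\xi)=\sum_{t\ge0}\gamma^t\mathbb E_\xi[r_i(s(t),a(t))]$ with $s(0)\sim\mu$. NMPG: for an integer $\kappa_G\ge0$, the game is a $\kappa_G$-networked Markov potential game ($\kappa_G$-NMPG) if there are functions $\Phi_i:\Xi\to\mathbb R$, $i\in\mathcal N$ (local potentials), such that for every $i\in\mathcal N$, $j\in N_i^{\kappa_G}$, $\xi_j,\xi_j'\in\Xi_j$, $\xi_{-j}\in\Xi_{-j}$: $J_j(\xi_j',\xi_{-j})-J_j(\xi_j,\xi_{-j})=\Phi_i(\xi_j',\xi_{-j})-\Phi_i(\xi_j,\xi_{-j})$. *)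

From HB Require Import structures.
From mathcomp Require Import all_boot all_order all_algebra.
From mathcomp Require Import all_classical all_reals all_analysis.
Set Implicit Arguments. Unset Strict Implicit. Unset Printing Implicit Defensive.
Import Order.TTheory GRing.Theory Num.Theory numFieldNormedType.Exports.
Local Open Scope ring_scope.

Section NMPG.
Variables (R : realType) (n : nat).
Implicit Types (adj : rel 'I_n).

Fixpoint nbhd adj (k : nat) (i : 'I_n) : {set 'I_n} :=
  match k with
  | 0 => [set i]
  | k'.+1 => nbhd adj k' i :|: [set j | [exists l in nbhd adj k' i, adj l j]]
  end.

Definition nmax adj (k : nat) : nat := \max_(i < n) #|nbhd adj k i|.

Variables (S A : 'I_n -> finType).

Definition jstate := {dffun forall i : 'I_n, S i}.
Definition jaction := {dffun forall i : 'I_n, A i}.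

(* a joint local policy: xi i s_i a_i = xi_i(a_i | s_i) *)
Definition policy := forall i : 'I_n, S i -> A i -> R.

Definition is_local_policy (xi : policy) : Prop :=
  forall i (si : S i), (forall ai, 0 <= xi i si ai) /\ \sum_(ai : A i) xi i si ai = 1.

(* local transition kernels: P i s a_i s_i' = P_i(s_i' | s_{N_i}, a_i) *)
Definition kernels := forall i : 'I_n, jstate -> A i -> S i -> R.

Definition jpol (xi : policy) (s : jstate) (a : jaction) : R :=
  \prod_(i < n) xi i (s i) (a i).

Definition jtrans (P : kernels) (s : jstate) (a : jaction) (s' : jstate) : R :=
  \prod_(i < n) P i s (a i) (s' i).

Fixpoint sdist (P : kernels) (mu : jstate -> R) (xi : policy) (t : nat)
  : jstate -> R :=
  match t with
  | 0 => mu
  | t'.+1 => fun s' => \sum_(s : jstate) \sum_(a : jaction)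
        sdist P mu xi t' s * jpol xi s a * jtrans P s a s'
  end.

Definition Jval (P : kernels) (mu : jstate -> R) (gamma : R)
  (r : 'I_n -> jstate -> jaction -> R) (xi : policy) (i : 'I_n) : R :=
  limn (series (fun t : nat => gamma ^+ t * \sum_(s : jstate) \sum_(a : jaction)
        sdist P mu xi t s * jpol xi s a * r i s a)).

Definition unilateral (j : 'I_n) (xi xi' : policy) : Prop :=
  forall k : 'I_n, k != j -> xi' k = xi k.

Definition is_local_potential adj (kG : nat) (J : policy -> 'I_n -> R)
  (Phi : 'I_n -> policy -> R) : Prop :=
  forall (i j : 'I_n) (xi xi' : policy), j \in nbhd adj kG i ->
    is_local_policy xi -> is_local_policy xi' -> unilateral j xi xi' ->
    J xi' j - J xi j = Phi i xi' - Phi i xi.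

End NMPG.

From HB Require Import structures.
From mathcomp Require Import all_boot all_order all_algebra.
From mathcomp Require Import all_classical all_reals all_analysis.
From mathcomp Require Import ring lra.
Set Implicit Arguments. Unset Strict Implicit. Unset Printing Implicit Defensive.
Import Order.TTheory GRing.Theory Num.Theory numFieldNormedType.Exports.
Local Open Scope ring_scope.

(* Every value J_j(xi) lies in [0, 1/(1-gamma)], because rewards lie in
   [0,1] and the state/action processes are probability distributions.  Fix a
   reference local policy xi0.  Agent i's potential only "sees" deviations of
   agents in N_i^{kG}: walking from xi to the policy obtained by resetting the
   agents of N_i^{kG} to xi0, one agent at a time, changes Phi_i by at most
   1/(1-gamma) per step (each step is a unilateral deviation, so the change
   equals a difference of two values J_j).  Hence
     Phihat_i(xi) := K + 1 + Phi_i(xi) - Phi_i(reset_i xi),  K = n(kG)/(1-gamma),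
   lies in [1, 2K+1].  The subtracted term does not depend on the agents of
   N_i^{kG}, so Phihat_i still satisfies the NMPG identity. *)

Lemma sum_dffun_prod (R : comNzRingType) (I : finType) (T_ : I -> finType)
  (f : forall i, T_ i -> R) :
  \sum_(a : {dffun forall i, T_ i}) \prod_(i : I) f i (a i) =
  \prod_(i : I) \sum_(x : T_ i) f i x.
Proof.
pose P_ := fun i => [ffun x : T_ i => f i x].
transitivity (\sum_(t : fprod T_) \prod_(i in I) P_ i (t i)).
  rewrite (reindex (@dffun_of_fprod I T_)); last exact/onW_bij/dffun_of_fprod_bij.
  by apply: eq_bigr => t _; apply: eq_bigr => i _; rewrite /P_ /dffun_of_fprod !ffunE.
rewrite (@big_fprod R 0 1 *%R +%R I T_ P_); symmetry; etransitivity;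
  last (exact: (bigA_distr_big_dep (tagged_with T_) (fun i j => untag 0 (P_ i) j))).
apply: eq_bigr => i _.
rewrite (eq_bigr (fun x => P_ i x)); last by move=> x _; rewrite ffunE.
by rewrite (big_tag P_ i).
Qed.

Lemma convex_comb_unit (R : realDomainType) (T : finType) (w f : T -> R) :
  (forall x, 0 <= w x) -> \sum_x w x = 1 -> (forall x, 0 <= f x <= 1) ->
  0 <= \sum_x w x * f x <= 1.
Proof.
move=> w0 w1 f01; apply/andP; split.
  by apply: sumr_ge0 => x _; rewrite mulr_ge0 //; case/andP: (f01 x).
rewrite -[X in _ <= X]w1; apply: ler_sum => x _.
by rewrite ler_piMr //; case/andP: (f01 x).
Qed.

Section Distributions.
Variables (R : realType) (n : nat) (S A : 'I_n -> finType).
Variables (P : kernels R S A) (mu : jstate S -> R).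
Arguments P : clear implicits.
Hypothesis P_ge0 : forall i (s : jstate S) ai si', 0 <= P i s ai si'.
Hypothesis P_sum1 : forall i (s : jstate S) ai, \sum_(si' : S i) P i s ai si' = 1.
Hypothesis mu_ge0 : forall s, 0 <= mu s.
Hypothesis mu_sum1 : \sum_s mu s = 1.

Lemma jpol_ge0 (xi : policy R S A) s a : is_local_policy xi -> 0 <= jpol xi s a.
Proof. by move=> hx; apply: prodr_ge0 => i _; case: (hx i (s i)). Qed.

Lemma jpol_sum1 (xi : policy R S A) s : is_local_policy xi -> \sum_a jpol xi s a = 1.
Proof.
move=> hx; rewrite /jpol (@sum_dffun_prod _ _ _ (fun i x => xi i (s i) x)).
by apply: big1 => i _; case: (hx i (s i)).
Qed.

Lemma jtrans_ge0 s a s' : 0 <= jtrans P s a s'.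
Proof. exact: prodr_ge0. Qed.

Lemma jtrans_sum1 s a : \sum_s' jtrans P s a s' = 1.
Proof.
rewrite /jtrans (@sum_dffun_prod _ _ _ (fun i x => P i s (a i) x)).
exact: big1.
Qed.

Lemma sdist_prob (xi : policy R S A) t : is_local_policy xi ->
  (forall s, 0 <= sdist P mu xi t s) /\ \sum_s sdist P mu xi t s = 1.
Proof.
move=> hx; elim: t => [|t [d0 d1]] //=; split.
  move=> s'; apply: sumr_ge0 => s _; apply: sumr_ge0 => a _.
  by rewrite !mulr_ge0 ?jtrans_ge0 ?jpol_ge0.
rewrite exchange_big /= -d1; apply: eq_bigr => s _.
rewrite exchange_big /= -[RHS]mulr1 -(jpol_sum1 s hx) mulr_sumr.
by apply: eq_bigr => a _; rewrite -mulr_sumr jtrans_sum1 mulr1.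
Qed.

Lemma expected_reward_unit (xi : policy R S A) (rj : jstate S -> jaction A -> R) t :
  is_local_policy xi -> (forall s a, 0 <= rj s a <= 1) ->
  0 <= \sum_s \sum_a sdist P mu xi t s * jpol xi s a * rj s a <= 1.
Proof.
move=> hx hr; have [d0 d1] := sdist_prob t hx.
under eq_bigr => s _ do under eq_bigr => a _ do rewrite -mulrA.
under eq_bigr => s _ do rewrite -mulr_sumr.
apply: convex_comb_unit => // s.
by apply: convex_comb_unit => // [a|]; [apply: jpol_ge0 | apply: jpol_sum1].
Qed.

End Distributions.

Lemma discounted_series_bounds (R : realType) (gamma : R) (u : nat -> R) :
  0 <= gamma < 1 -> (forall t, 0 <= u t <= gamma ^+ t) ->
  0 <= limn (series u) <= (1 - gamma)^-1.
Proof.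
move=> /andP[g0 g1] hu.
have g1' : 0 < 1 - gamma by rewrite subr_gt0.
have geom N : (\sum_(0 <= k < N) gamma ^+ k) * (1 - gamma) = 1 - gamma ^+ N.
  by rewrite big_mkord -[LHS]opprK -mulrN opprB mulrC -subrX1 opprB.
have partial_le N : series u N <= (1 - gamma)^-1.
  apply: (@le_trans _ _ (\sum_(0 <= k < N) gamma ^+ k)).
    by apply: ler_sum => k _; case/andP: (hu k).
  by rewrite -[X in _ <= X]mul1r ler_pdivlMr // geom gerBl exprn_ge0.
have partial_ge0 N : 0 <= series u N.
  by apply: sumr_ge0 => k _; case/andP: (hu k).
have cv : cvgn (series u).
  apply: nondecreasing_is_cvgn.
    apply/nondecreasing_seqP => N; rewrite /series /= big_nat_recr //=.
    by rewrite lerDl; case/andP: (hu N).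
  by exists (1 - gamma)^-1 => _ [k _ <-].
apply/andP; split; [apply: limr_ge | apply: limr_le] => //; exact: nearW.
Qed.

Lemma Jval_bounds (R : realType) (n : nat) (S A : 'I_n -> finType)
  (P : kernels R S A) (mu : jstate S -> R) (gamma : R)
  (r : 'I_n -> jstate S -> jaction A -> R) (xi : policy R S A) j :
  (forall i (s : jstate S) ai si', 0 <= P i s ai si') ->
  (forall i (s : jstate S) ai, \sum_(si' : S i) P i s ai si' = 1) ->
  (forall s : jstate S, 0 <= mu s) -> \sum_(s : jstate S) mu s = 1 ->
  0 <= gamma < 1 ->
  (forall i (s : jstate S) (a : jaction A), 0 <= r i s a <= 1) ->
  is_local_policy xi ->
  0 <= Jval P mu gamma r xi j <= (1 - gamma)^-1.
Proof.
move=> hP0 hP1 hm0 hm1 hg hr hx; apply: discounted_series_bounds => // t.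
have g0 : 0 <= gamma ^+ t by rewrite exprn_ge0 //; case/andP: hg.
have /andP[e0 e1] := expected_reward_unit hP0 hP1 hm0 hm1 t hx (hr j).
by rewrite mulr_ge0 //= ler_piMr.
Qed.

(* Switch the agents of T one at a time; each switch is a
   unilateral deviation of some j in N_i^{kG}, so it changes Phi_i exactly
   as it changes J_j, i.e. by at most M. *)
Lemma potential_deviation_bound (R : realType) (n : nat) (adj : rel 'I_n)
  (S A : 'I_n -> finType) (kG : nat) (J : policy R S A -> 'I_n -> R)
  (Phi : 'I_n -> policy R S A -> R) (M : R) i :
  is_local_potential adj kG J Phi ->
  (forall xi j, is_local_policy xi -> 0 <= J xi j <= M) ->
  forall (T : {set 'I_n}), T \subset nbhd adj kG i ->
  forall xi xi' : policy R S A, is_local_policy xi -> is_local_policy xi' ->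
  (forall k, k \notin T -> xi' k = xi k) ->
  `|Phi i xi' - Phi i xi| <= #|T|%:R * M.
Proof.
move=> hpot hJ T; elim: {T}#|T| {-2}T (erefl #|T|) => [|m IH] T hT hsub xi xi' hx hx' hagree.
  have -> : xi' = xi.
    apply: functional_extensionality_dep => k; apply: hagree.
    by move/eqP: hT; rewrite cards_eq0 => /eqP ->; rewrite inE.
  by rewrite hT subrr normr0 mul0r.
have [j jT] : exists j, j \in T by apply/card_gt0P; rewrite hT.
pose y : policy R S A := fun k => if k == j then xi' k else xi k.
have hy : is_local_policy y by move=> k sk; rewrite /y; case: (k == j); [apply: hx' | apply: hx].
have step : `|Phi i y - Phi i xi| <= M.
  have y_unilateral : unilateral j xi y by move=> k /negbTE kj; rewrite /y kj.
  rewrite -(hpot i j xi y (fintype.subsetP hsub j jT) hx hy y_unilateral).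
  have /andP[a0 a1] := hJ y j hy; have /andP[b0 b1] := hJ xi j hx.
  by rewrite ler_norml; apply/andP; split; lra.
have rest : `|Phi i xi' - Phi i y| <= m%:R * M.
  have hTj : #|T :\ j| = m by move: hT; rewrite (cardsD1 j T) jT => -[].
  rewrite -hTj; apply: IH => //; first exact: fintype.subset_trans (subsetDl T _) hsub.
  move=> k; rewrite !inE negb_and negbK /y => /orP[/eqP->|kT]; first by rewrite eqxx.
  by case: eqP => // _; apply: hagree.
rewrite hT -natr1 mulrDl mul1r (_ : Phi i xi' - Phi i xi =
  (Phi i xi' - Phi i y) + (Phi i y - Phi i xi)); last by ring.
exact: le_trans (ler_normD _ _) (lerD rest step).
Qed.

Definition reset_nbhd (R : realType) (n : nat) (adj : rel 'I_n) (S A : 'I_n -> finType)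
  (kG : nat) (xi0 : policy R S A) (i : 'I_n) (xi : policy R S A) : policy R S A :=
  fun k => if k \in nbhd adj kG i then xi0 k else xi k.

Lemma reset_nbhd_unilateral (R : realType) (n : nat) (adj : rel 'I_n)
  (S A : 'I_n -> finType) (kG : nat) (xi0 xi xi' : policy R S A) i j :
  j \in nbhd adj kG i -> unilateral j xi xi' ->
  reset_nbhd adj kG xi0 i xi' = reset_nbhd adj kG xi0 i xi.
Proof.
move=> hj hu; apply: functional_extensionality_dep => k; rewrite /reset_nbhd.
by case: ifP => // kN; apply: hu; apply: contraFneq kN => ->.
Qed.

Lemma reset_nbhd_local (R : realType) (n : nat) (adj : rel 'I_n)
  (S A : 'I_n -> finType) (kG : nat) (xi0 xi : policy R S A) i :
  is_local_policy xi0 -> is_local_policy xi ->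
  is_local_policy (reset_nbhd adj kG xi0 i xi).
Proof. by move=> hx0 hx k sk; rewrite /reset_nbhd; case: ifP => _; [apply: hx0 | apply: hx]. Qed.

Lemma card_nbhd_le_nmax (n : nat) (adj : rel 'I_n) (k : nat) (i : 'I_n) :
  (#|nbhd adj k i| <= nmax adj k)%N.
Proof. exact: (@leq_bigmax _ (fun i => #|nbhd adj k i|) i). Qed.

Theorem mainTheorem8 (R : realType) (n : nat) (adj : rel 'I_n)
  (S A : 'I_n -> finType)
  (P : kernels R S A) (mu : jstate S -> R) (gamma : R)
  (r : 'I_n -> jstate S -> jaction A -> R) (kr kG : nat)
  (Phi : 'I_n -> policy R S A -> R) :
  symmetric adj ->
  (forall i (s : jstate S) ai si', 0 <= P i s ai si') ->
  (forall i (s : jstate S) ai, \sum_(si' : S i) P i s ai si' = 1) ->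
  (forall i (s s' : jstate S) ai, (forall j, j \in nbhd adj 1 i -> s j = s' j) ->
     P i s ai = P i s' ai) ->
  (forall s : jstate S, 0 <= mu s) -> \sum_(s : jstate S) mu s = 1 ->
  (0 < gamma < 1) ->
  (forall i (s : jstate S) (a : jaction A), 0 <= r i s a <= 1) ->
  (forall i (s s' : jstate S) (a a' : jaction A), (forall j, j \in nbhd adj kr i -> s j = s' j /\ a j = a' j) ->
     r i s a = r i s' a') ->
  is_local_potential adj kG (Jval P mu gamma r) Phi ->
  exists (Phihat : 'I_n -> policy R S A -> R) (Phimin Phimax : R),
    [/\ is_local_potential adj kG (Jval P mu gamma r) Phihat,
        0 < Phimin, 0 < Phimax,
        0 <= Phimax - Phimin <= 2 * (nmax adj kG)%:R / (1 - gamma)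
      & forall i (xi : policy R S A), is_local_policy xi -> Phimin <= Phihat i xi <= Phimax].
Proof.
move=> _ hP0 hP1 _ hm0 hm1 /andP[g0 g1] hr _ hpot.
set M := (1 - gamma)^-1; set K := (nmax adj kG)%:R * M.
have K0 : 0 <= K by rewrite mulr_ge0 // invr_ge0 subr_ge0 ltW.
have hJ xi j : is_local_policy xi -> 0 <= Jval P mu gamma r xi j <= M.
  by apply: Jval_bounds; rewrite // ltW.
have widthE : 2 * (nmax adj kG)%:R / (1 - gamma) = 2 * K by rewrite mulrA.
(* Without any local policy the bounds are vacuous: keep Phi. *)
have [[xi0 hx0]|nopol] := pselect (exists xi0 : policy R S A, is_local_policy xi0); last first.
  exists Phi, 1, 1; split=> //; first by rewrite subrr lexx widthE mulr_ge0.
  by move=> i xi hx; case: nopol; exists xi.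
pose reset := reset_nbhd adj kG xi0.
exists (fun i xi => K + 1 + Phi i xi - Phi i (reset i xi)), 1, (2 * K + 1); split.
- move=> i j xi xi' hj hx hx' hu.
  by rewrite /reset (reset_nbhd_unilateral _ hj hu) (hpot i j xi xi') //; ring.
- exact: ltr01.
- lra.
- by rewrite widthE addrK mulr_ge0 //= lexx.
move=> i xi hx.
have hreset : is_local_policy (reset i xi) by apply: reset_nbhd_local.
have : `|Phi i xi - Phi i (reset i xi)| <= K.
  apply: le_trans (potential_deviation_bound hpot hJ (subxx _) hreset hx _) _.
    by move=> k /negbTE kN; rewrite /reset /reset_nbhd kN.
  apply: ler_wpM2r; first by rewrite invr_ge0 subr_ge0 ltW.
  by rewrite ler_nat card_nbhd_le_nmax.
by rewrite ler_norml => /andP[h1 h2]; apply/andP; split; lra.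
Qed.
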